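(* Let $\Omega$ be a monoid, $A$ an associative algebra, $M$ an $A$-bimodule, $H$ a Hochschild $2$-cocycle, and $T=\{T_\alpha\}_{\alpha\in\Omega}$ an $H$-twisted $\mathcal{O}$-operator family. Let $T^t = \sum_{i\ge 0} t^i T^{(i)}$ be a formal one-parameter deformation of $T$. Then the infinitesimal $T^{(1)}=\{T^{(1)}_\alpha\}_{\alpha\in\Omega}\in C^1_{\mathrm{TwOoperf}}(M,A)$ is a $1$-cocycle, i.e. $\delta_{\mathrm{TwOoperf}}(T^{(1)})=0$. Moreover, if $\overline{T}^t$ is a formal one-parameter deformation equivalent to $T^t$, then $T^{(1)}$ and $\overline{T}^{(1)}$ define the same class in $H^1_{\mathrm{TwOoperf}}(M,A)$.
   Context: $\Omega$ is a semigroup with unit $1$, algebras over a field $\mathbf{k}$ of characteristic $0$. Hochschild $2$-cocycle: bilinear $H:A^{\otimes 2}\to M$ with $a \cdot H (b, c) - H ( a \cdot b, c)+ H (a, b \cdot c) - H (a, b) \cdot c =0$. $H$-twisted $\mathcal{O}$-operator family: linear maps $T_\alpha: M\to A$ with $T_\alpha (u) \cdot T_\beta (v) = T_{\alpha \beta} ( T_\alpha (u) \cdot v + u \cdot T_\beta (v) + H (T_\alpha (u), T_\beta (v)))$. Cochains: $C^0_{\mathrm{TwOoperf}}(M,A)=A$, $C^n_{\mathrm{TwOoperf}}(M,A)$ ($n\ge1$) = families $f=\{f_{\alpha_1,\dots,\alpha_n}:M^{\otimes n}\to A\}_{\alpha_i\in\Omega}$ of multilinear maps. In low degrees the differential is: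 for $a\in A$, $(\delta a)_\alpha(u)= T_\alpha (u) \cdot a - T_\alpha (u \cdot a) - T_\alpha (H (T_\alpha u, a)) - a \cdot T_\alpha (u) + T_\alpha (a \cdot u) + T_\alpha (H (a, T_\alpha u))$; for $f\in C^1$, $(\delta f)_{\alpha_1,\alpha_2}(u_1,u_2)= T_{\alpha_1}(u_1)\cdot f_{\alpha_2}(u_2) - T_{\alpha_1\alpha_2}(u_1\cdot f_{\alpha_2}(u_2)) - T_{\alpha_1\alpha_2}(H(T_{\alpha_1}u_1, f_{\alpha_2}(u_2))) - f_{\alpha_1\alpha_2}\big(T_{\alpha_1}(u_1)\cdot u_2 + u_1\cdot T_{\alpha_2}(u_2) + H(T_{\alpha_1}u_1,T_{\alpha_2}u_2)\big) + f_{\alpha_1}(u_1)\cdot T_{\alpha_2}(u_2) - T_{\alpha_1\alpha_2}(f_{\alpha_1}(u_1)\cdot u_2) - T_{\alpha_1\alpha_2}(H(f_{\alpha_1}(u_1),T_{\alpha_2}u_2))$. (This is the Hochschild-type complex of the $\Omega$-associative algebra $(M,\{u\ast_{\alpha,\beta}v = T_\alpha u\cdot v+u\cdot T_\beta v+H(T_\alpha u,T_\beta v)\})$ with coefficients in $A$, with $\delta^2=0$.) $H^1_{\mathrm{TwOoperf}}(M,A)=\ker(\delta|_{C^1})/\delta(C^0)$. A formal one-parameter deformation of $T$ is a formal sum $T^t=\sum_{i\ge0}t^iT^{(i)}$, $T^{(i)}=\{T^{(i)}_\alpha:M\to A\}_{\alpha\in\Omega}$, $T^{(0)}=T$, such that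 the $\mathbf{k}[[t]]$-linear extensions $T^t_\alpha: M[[t]]\to A[[t]]$ form an $H$-twisted $\mathcal{O}$-operator family (with $H$ extended $\mathbf{k}[[t]]$-bilinearly): $T^t_\alpha (u) \cdot T^t_\beta (v) = T^t_{\alpha \beta} ( T^t_\alpha (u) \cdot v + u \cdot T^t_\beta (v) + H (T^t_\alpha (u), T^t_\beta (v)))$. Two deformations $T^t,\overline{T}^t$ are equivalent if there are $\theta\in A$, linear maps $\phi_i:A\to A$ and $\psi_i:M\to M$ ($i\ge2$) such that $\phi^t = \mathrm{id}_A + t (l^{\mathrm{ad}}_\theta - r^{\mathrm{ad}}_\theta) + \sum_{i\ge2} t^i \phi_i$ and $\psi^t_\alpha = \mathrm{id}_M + t (l_\theta - r_\theta + H (\theta, T_\alpha -) - H (T_\alpha -, \theta) ) + \sum_{i\ge 2} t^i \psi_i$ satisfy $\phi^t \circ T^t_\alpha = \overline{T}^t_\alpha \circ \psi^t_\alpha$ for all $\alpha$; here $l^{\mathrm{ad}}_\theta(a)=\theta\cdot a$, $r^{\mathrm{ad}}_\theta(a)=a\cdot\theta$, $l_\theta(u)=\theta\cdot u$, $r_\theta(u)=u\cdot\theta$. *)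

From HB Require Import structures.
From mathcomp Require Import all_boot all_order all_algebra.
Set Implicit Arguments. Unset Strict Implicit. Unset Printing Implicit Defensive.
Import GRing.Theory.
Local Open Scope ring_scope.

Definition is_monoid (Omega : Type) (mul : Omega -> Omega -> Omega) (one : Omega) :=
  (forall a b c, mul a (mul b c) = mul (mul a b) c) /\
  (forall a, mul one a = a) /\ (forall a, mul a one = a).

Section Defs.
Variables (k : fieldType) (A M : lmodType k).
Variables (Omega : Type) (mul : Omega -> Omega -> Omega).
Variables (mulA : A -> A -> A) (lact : A -> M -> M) (ract : M -> A -> M).

Definition is_assoc_algebra :=
  (forall a, linear (mulA a)) /\ (forall b, linear (fun a => mulA a b)) /\
  (forall a b c, mulA a (mulA b c) = mulA (mulA a b) c).

Definition is_bimodule :=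
  (forall a, linear (lact a)) /\ (forall u, linear (fun a => lact a u)) /\
  (forall u, linear (ract u)) /\ (forall a, linear (fun u => ract u a)) /\
  (forall a b u, lact (mulA a b) u = lact a (lact b u)) /\
  (forall a b u, ract u (mulA a b) = ract (ract u a) b) /\
  (forall a b u, ract (lact a u) b = lact a (ract u b)).

Variable H : A -> A -> M.

Definition hochschild_2cocycle :=
  (forall a, linear (H a)) /\ (forall b, linear (fun a => H a b)) /\
  (forall a b c, lact a (H b c) - H (mulA a b) c + H a (mulA b c) - ract (H a b) c = 0).

Definition twisted_Oop_family (T : Omega -> M -> A) :=
  (forall al, linear (T al)) /\
  (forall al be u v, mulA (T al u) (T be v) =
     T (mul al be) (lact (T al u) v + ract u (T be v) + H (T al u) (T be v))).

(* Formal one-parameter deformation T^t = sum_i t^i Td i, written out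
   coefficientwise (coefficient of t^n of the k[[t]]-linear extension). *)
Definition formal_deformation (T : Omega -> M -> A) (Td : nat -> Omega -> M -> A) :=
  (forall i al, linear (Td i al)) /\ (Td 0%N = T) /\
  (forall (n : nat) al be u v,
     \sum_(i < n.+1) mulA (Td i al u) (Td (n - i)%N be v) =
     \sum_(i < n.+1) Td i (mul al be)
         (lact (Td (n - i)%N al u) v + ract u (Td (n - i)%N be v)) +
     \sum_(i < n.+1) \sum_(j < (n - i).+1)
         Td i (mul al be) (H (Td j al u) (Td (n - i - j)%N be v))).

Definition phi_coef (theta : A) (phi : nat -> A -> A) (i : nat) : A -> A :=
  match i with
  | 0 => fun a => a
  | 1 => fun a => mulA theta a - mulA a theta
  | _ => phi i
  end.

Definition psi_coef (T : Omega -> M -> A) (theta : A) (psi : nat -> M -> M)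
    (al : Omega) (i : nat) : M -> M :=
  match i with
  | 0 => fun u => u
  | 1 => fun u => lact theta u - ract u theta + H theta (T al u) - H (T al u) theta
  | _ => psi i
  end.

(* Equivalence of deformations: phi^t o T^t_al = Tb^t_al o psi^t_al,
   coefficientwise. *)
Definition equivalent_deformations (T : Omega -> M -> A)
    (Td Tb : nat -> Omega -> M -> A) :=
  exists (theta : A) (phi : nat -> A -> A) (psi : nat -> M -> M),
    (forall i, (2 <= i)%N -> linear (phi i)) /\
    (forall i, (2 <= i)%N -> linear (psi i)) /\
    (forall (n : nat) al u,
       \sum_(i < n.+1) phi_coef theta phi i (Td (n - i)%N al u) =
       \sum_(i < n.+1) Tb i al (psi_coef T theta psi al (n - i)%N u)).

Definition delta0 (T : Omega -> M -> A) (a : A) (al : Omega) (u : M) : A :=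
  mulA (T al u) a - T al (ract u a) - T al (H (T al u) a)
  - mulA a (T al u) + T al (lact a u) + T al (H a (T al u)).

Definition delta1 (T : Omega -> M -> A) (f : Omega -> M -> A)
    (a1 a2 : Omega) (u1 u2 : M) : A :=
  mulA (T a1 u1) (f a2 u2) - T (mul a1 a2) (ract u1 (f a2 u2))
  - T (mul a1 a2) (H (T a1 u1) (f a2 u2))
  - f (mul a1 a2) (lact (T a1 u1) u2 + ract u1 (T a2 u2) + H (T a1 u1) (T a2 u2))
  + mulA (f a1 u1) (T a2 u2) - T (mul a1 a2) (lact (f a1 u1) u2)
  - T (mul a1 a2) (H (f a1 u1) (T a2 u2)).

Definition is_1cocycle (T : Omega -> M -> A) (f : Omega -> M -> A) :=
  forall a1 a2 u1 u2, delta1 T f a1 a2 u1 u2 = 0.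

Definition same_H1_class (T : Omega -> M -> A) (f g : Omega -> M -> A) :=
  exists a : A, forall al u, f al u - g al u = delta0 T a al u.

End Defs.

(** Both claims are comparisons of the coefficients of [t].  At order [t] the
    identity
    [T^t_a(u) T^t_b(v) = T^t_ab(T^t_a(u) v + u T^t_b(v) + H(T^t_a u, T^t_b v))]
    is, term by term, the equation [delta T^(1) = 0], and the equivalence
    [phi^t o T^t_a = Tb^t_a o psi^t_a] says that
    [T^(1) - Tb^(1) = delta theta]. *)
From HB Require Import structures.
From mathcomp Require Import all_boot all_order all_algebra.
Import GRing.Theory.
Set Implicit Arguments.
Unset Strict Implicit.
Local Open Scope ring_scope.

Section LinearFun.
Variables (k : fieldType) (U V : lmodType k) (f : U -> V).
Hypothesis f_linear : linear f.

HB.instance Definition _ := GRing.isLinear.Build k U V *:%R f f_linear.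

Lemma linear_funD x y : f (x + y) = f x + f y.
Proof. exact: raddfD. Qed.

Lemma linear_funB x y : f (x - y) = f x - f y.
Proof. exact: raddfB. Qed.

End LinearFun.

Lemma subr_eq0_of_sum_eq (V : zmodType) (a b c d e g x y : V) :
  a + e = d + b + x + (c + g + y) -> a - b - c - (x + y) + e - d - g = 0.
Proof.
move=> E; apply/eqP; rewrite -(subrr (a + e)) {2}E !opprD !addrA.
by rewrite (ACl (1*6*7*2*4*3*8*5))%AC.
Qed.

Lemma subr_eq_of_sum_eq (V : zmodType) (x y p q a b c d : V) :
  x + (p - q) = a - b + c - d + y -> x - y = q - b - d - p + a + c.
Proof.
move=> E; apply/eqP; rewrite subr_eq -(addrK (p - q) x) E opprB !addrA.
by rewrite (ACl (6*2*4*7*1*3*5))%AC.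
Qed.

Section FirstOrder.
Variables (k : fieldType) (Omega : Type) (mul : Omega -> Omega -> Omega).
Variables (A M : lmodType k) (mulA : A -> A -> A).
Variables (lact : A -> M -> M) (ract : M -> A -> M) (H : A -> A -> M).
Variables (T : Omega -> M -> A) (Td : nat -> Omega -> M -> A).

Lemma formal_deformation_linear :
  formal_deformation mul mulA lact ract H T Td -> forall al, linear (T al).
Proof. by move=> [Td_linear [<- _]]; exact: Td_linear 0%N. Qed.

Lemma formal_deformation_coef1 :
  formal_deformation mul mulA lact ract H T Td ->
  forall al be u v,
    mulA (T al u) (Td 1%N be v) + mulA (Td 1%N al u) (T be v) =
    T (mul al be) (lact (Td 1%N al u) v + ract u (Td 1%N be v))
    + Td 1%N (mul al be) (lact (T al u) v + ract u (T be v))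
    + (T (mul al be) (H (T al u) (Td 1%N be v))
       + T (mul al be) (H (Td 1%N al u) (T be v))
       + Td 1%N (mul al be) (H (T al u) (T be v))).
Proof.
move=> [_ [Td0 Td_mul]] al be u v.
have := Td_mul 1%N al be u v.
by rewrite !big_ord_recr !big_ord0 /= !add0r !subn0 !subnn Td0.
Qed.

Lemma formal_deformation_coef1_1cocycle :
  formal_deformation mul mulA lact ract H T Td ->
  is_1cocycle mul mulA lact ract H T (Td 1%N).
Proof.
move=> HTd a1 a2 u1 u2; have [Td_linear _] := HTd.
have T_linear := formal_deformation_linear HTd.
have := formal_deformation_coef1 HTd a1 a2 u1 u2.
rewrite (linear_funD (T_linear _)) => coef1.
rewrite /delta1 (linear_funD (Td_linear 1%N _)).
exact: subr_eq0_of_sum_eq coef1.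
Qed.

Variable Tb : nat -> Omega -> M -> A.

Lemma equivalent_deformations_coef1 :
  Td 0%N = T -> Tb 0%N = T ->
  equivalent_deformations mulA lact ract H T Td Tb ->
  exists theta, forall al u,
    Td 1%N al u + (mulA theta (T al u) - mulA (T al u) theta) =
    T al (lact theta u - ract u theta + H theta (T al u) - H (T al u) theta)
    + Tb 1%N al u.
Proof.
move=> Td0 Tb0 [theta [phi [psi [_ [_ Tb_conj]]]]].
exists theta => al u; have := Tb_conj 1%N al u.
by rewrite !big_ord_recr !big_ord0 /= !add0r !subn0 !subnn Td0 Tb0.
Qed.

Lemma equivalent_deformations_same_H1_class :
  formal_deformation mul mulA lact ract H T Td ->
  formal_deformation mul mulA lact ract H T Tb ->
  equivalent_deformations mulA lact ract H T Td Tb ->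
  same_H1_class mulA lact ract H T (Td 1%N) (Tb 1%N).
Proof.
move=> HTd [_ [Tb0 _]]; have [_ [Td0 _]] := HTd.
have T_linear := formal_deformation_linear HTd.
move=> /(equivalent_deformations_coef1 Td0 Tb0) [theta Etheta]; exists theta => al u.
move: (Etheta al u).
rewrite (linear_funB (T_linear al)) (linear_funD (T_linear al)) (linear_funB (T_linear al)).
exact: subr_eq_of_sum_eq.
Qed.

End FirstOrder.

Theorem theorem4p7
  (k : fieldType) (Hchar : [pchar k] =i pred0)
  (Omega : Type) (mul : Omega -> Omega -> Omega) (one : Omega)
  (HOmega : is_monoid mul one)
  (A M : lmodType k) (mulA : A -> A -> A) (lact : A -> M -> M) (ract : M -> A -> M)
  (HA : is_assoc_algebra mulA) (HM : is_bimodule mulA lact ract)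
  (H : A -> A -> M) (HH : hochschild_2cocycle mulA lact ract H)
  (T : Omega -> M -> A) (HT : twisted_Oop_family mul mulA lact ract H T)
  (Td : nat -> Omega -> M -> A)
  (HTd : formal_deformation mul mulA lact ract H T Td) :
  is_1cocycle mul mulA lact ract H T (Td 1%N) /\
  (forall Tb : nat -> Omega -> M -> A,
     formal_deformation mul mulA lact ract H T Tb ->
     equivalent_deformations mulA lact ract H T Td Tb ->
     same_H1_class mulA lact ract H T (Td 1%N) (Tb 1%N)).
Proof.
split; first exact: formal_deformation_coef1_1cocycle.
move=> Tb HTb; exact: equivalent_deformations_same_H1_class HTd HTb.
Qed.
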